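(* For every $n\geq 3$, the formula $\delta(n)$ is not a theorem of ${\bf T45m}$.
   Context: Formulas are built from a denumerable set of propositional variables $p_1,p_2,\ldots$ by the unary connectives $\neg$, $\Box$ and the binary connective $\to$; $For$ is the set of all formulas. Abbreviations: $\Diamond\alpha:=\neg\Box\neg\alpha$, $\alpha\vee\beta:=\neg\alpha\to\beta$. For formulas $\alpha_1,\ldots,\alpha_k$ ($k\ge 2$), $\bigvee\{\alpha_1,\ldots,\alpha_k\}:=((\ldots((\alpha_1\vee\alpha_2)\vee\alpha_3)\vee\ldots)\vee\alpha_k)$. For $n\geq 3$: $\alpha(n)=\bigvee\{p_j: 1\le j\le n\}$, $\beta_i(n)=\bigvee\{p_j:1\le j\le n,\ j\ne i\}$ for $1\le i\le n$, and $\delta(n)=\bigvee\{\Box\alpha(n)\to\Box\beta_i(n): 1\le i\le n\}$. ${\bf T45m}$ is the Hilbert calculus whose axioms are all instances (over $For$) of the axiom schemas of a standard Hilbert calculus for classical propositional logic in the signature $\{\neg,\to\}$, plus all instances of: (K) $\Box(\alpha\to\beta)\to(\Box\alpha\to\Box\beta)$; (K1) $\Box(\alpha\to\beta)\to(\Diamond\alpha\to\Diamond\beta)$; (K2) $\Diamond(\alpha\to\beta)\to(\Box\alpha\to\Diamond\beta)$; (M1) $\neg\Diamond\alpha\to\Box(\alpha\to\beta)$; (M2) $\Box\beta\to\Box(\alpha\to\beta)$; (M3) $\Diamond\beta\to\Diamond(\alpha\to\beta)$; (M4) $\Diamond\neg\alpha\to\Diamond(\alpha\to\beta)$; (T) $\Box\alpha\to\alpha$;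 (DN1) $\Box\alpha\to\Box\neg\neg\alpha$; (DN2) $\Box\neg\neg\alpha\to\Box\alpha$; (4) $\Box\alpha\to\Box\Box\alpha$; (5) $\Diamond\Box\alpha\to\Box\alpha$; modus ponens is the only rule. *)

From Stdlib Require Import List Arith.
Import ListNotations.

(* Formulas over variables p_1, p_2, ... ; [Var j] is p_j (index 0 unused
   by the statement). Connectives: negation, box, implication. *)
Inductive form : Type :=
| Var : nat -> form
| Neg : form -> form
| Box : form -> form
| Imp : form -> form -> form.

Definition Dia (a : form) : form := Neg (Box (Neg a)).
Definition Or (a b : form) : form := Imp (Neg a) b.

Definition bigvee (l : list form) : form :=
  match l with
  | [] => Var 0 (* never used: all lists below are nonempty, of length >= 2 *)
  | a :: l' => fold_left Or l' a
  end.

Definition alpha (n : nat) : form := bigvee (map Var (seq 1 n)).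

Definition beta (n i : nat) : form :=
  bigvee (map Var (filter (fun j => negb (Nat.eqb j i)) (seq 1 n))).

Definition delta (n : nat) : form :=
  bigvee (map (fun i => Imp (Box (alpha n)) (Box (beta n i))) (seq 1 n)).

(* The Hilbert calculus T45m.  Classical propositional part: the standard
   (Lukasiewicz/Mendelson) axiom schemes for {neg, ->}. *)
Inductive T45m : form -> Prop :=
| ax_P1 a b : T45m (Imp a (Imp b a))
| ax_P2 a b c : T45m (Imp (Imp a (Imp b c)) (Imp (Imp a b) (Imp a c)))
| ax_P3 a b : T45m (Imp (Imp (Neg a) (Neg b)) (Imp b a))
| ax_K a b : T45m (Imp (Box (Imp a b)) (Imp (Box a) (Box b)))
| ax_K1 a b : T45m (Imp (Box (Imp a b)) (Imp (Dia a) (Dia b)))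
| ax_K2 a b : T45m (Imp (Dia (Imp a b)) (Imp (Box a) (Dia b)))
| ax_M1 a b : T45m (Imp (Neg (Dia a)) (Box (Imp a b)))
| ax_M2 a b : T45m (Imp (Box b) (Box (Imp a b)))
| ax_M3 a b : T45m (Imp (Dia b) (Dia (Imp a b)))
| ax_M4 a b : T45m (Imp (Dia (Neg a)) (Dia (Imp a b)))
| ax_T a : T45m (Imp (Box a) a)
| ax_DN1 a : T45m (Imp (Box a) (Box (Neg (Neg a))))
| ax_DN2 a : T45m (Imp (Box (Neg (Neg a))) (Box a))
| ax_4 a : T45m (Imp (Box a) (Box (Box a)))
| ax_5 a : T45m (Imp (Dia (Box a)) (Box a))
| rule_MP a b : T45m a -> T45m (Imp a b) -> T45m b.

(* Every axiom of T45m is valid in the universal S5 models, where [Box a]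
   holds iff [a] holds at every world, and modus ponens preserves validity.
   In the model whose worlds are 1, ..., n and where world i makes exactly
   p_i true, every world satisfies some p_j with j <= n, so [Box (alpha n)]
   holds; but world i refutes [beta n i], so every disjunct
   [Box (alpha n) -> Box (beta n i)] of [delta n] fails. *)
From Stdlib Require Import List Arith Lia Classical.
Import ListNotations.

Section UniversalModel.
Variables (W : Type) (V : W -> nat -> Prop).

Fixpoint holds (w : W) (f : form) : Prop :=
  match f with
  | Var j => V w j
  | Neg a => ~ holds w a
  | Box a => forall w', holds w' a
  | Imp a b => holds w a -> holds w b
  end.

Lemma T45m_sound f : T45m f -> forall w, holds w f.
Proof.
  induction 1; intro w; cbn; try firstorder.
  (* P3, DN2 and 5 are the schemes that need excluded middle. *)
  all: apply NNPP; firstorder.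
Qed.

Lemma holds_fold_left_Or w l a :
  holds w (fold_left Or l a) <-> holds w a \/ exists b, In b l /\ holds w b.
Proof.
  revert a; induction l as [|b l IH]; intro a; cbn.
  - firstorder.
  - rewrite IH; cbn.
    destruct (classic (holds w a)); firstorder congruence.
Qed.

Lemma holds_bigvee w l :
  l <> [] -> (holds w (bigvee l) <-> exists b, In b l /\ holds w b).
Proof.
  destruct l as [|a l]; intro Hl; [congruence|].
  cbn; rewrite holds_fold_left_Or; firstorder congruence.
Qed.

End UniversalModel.

Section Countermodel.
Variable n : nat.

Definition world : Type := {i : nat | 1 <= i <= n}.

Definition only_own_var (w : world) (j : nat) : Prop := j = proj1_sig w.

Notation holds := (holds world only_own_var).

Lemma holds_alpha w : holds w (alpha n).
Proof.
  destruct w as [i Hi].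
  unfold alpha; rewrite holds_bigvee by (destruct n; [lia | discriminate]).
  exists (Var i); split; [apply in_map, in_seq; lia | reflexivity].
Qed.

Lemma beta_nonempty i (Hn : 2 <= n) : filter (fun j => negb (j =? i)) (seq 1 n) <> [].
Proof.
  set (other := if i =? 1 then 2 else 1).
  assert (Hother : In other (filter (fun j => negb (j =? i)) (seq 1 n))).
  { apply filter_In; split.
    - apply in_seq; unfold other; destruct (i =? 1); lia.
    - apply Bool.negb_true_iff, Nat.eqb_neq; unfold other.
      destruct (Nat.eqb_spec i 1); lia. }
  intro Hnil; rewrite Hnil in Hother; contradiction.
Qed.

Lemma not_holds_beta_own w (Hn : 2 <= n) : ~ holds w (beta n (proj1_sig w)).
Proof.
  unfold beta; rewrite holds_bigvee
    by (intro Hnil; apply map_eq_nil in Hnil; exact (beta_nonempty _ Hn Hnil)).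
  intros [b [Hb Hw]].
  apply in_map_iff in Hb as [j [<- Hj]].
  apply filter_In in Hj as [_ Hj].
  apply Bool.negb_true_iff, Nat.eqb_neq in Hj.
  exact (Hj Hw).
Qed.

Lemma not_holds_delta w (Hn : 2 <= n) : ~ holds w (delta n).
Proof.
  unfold delta; rewrite holds_bigvee by (destruct n; [lia | discriminate]).
  intros [b [Hb Hw]].
  apply in_map_iff in Hb as [i [<- Hi]]; apply in_seq in Hi.
  assert (Hi' : 1 <= i <= n) by lia.
  apply (not_holds_beta_own (exist _ i Hi') Hn).
  exact (Hw holds_alpha _).
Qed.

End Countermodel.

Theorem mainTheorem14 : forall n : nat, 3 <= n -> ~ T45m (delta n).
Proof.
  intros n Hn Hdelta.
  assert (H1n : 1 <= 1 <= n) by lia.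
  apply (not_holds_delta n (exist _ 1 H1n) ltac:(lia)).
  exact (T45m_sound _ _ _ Hdelta _).
Qed.
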